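(* Let $G=(V\cup\{s,t\},E)$ be an undirected series-parallel graph with source $s$ and sink $t$, let $x$ be a least core payoff of the corresponding Edge Path Coalitional Game, and let $e\in E$ be an edge contained in no minimum cardinality $s$-$t$ edge cut of $G$ (i.e., $C_e(G)=\emptyset$). Then $x_e=0$.
   Context: An undirected graph $G$ with source $s$ and sink $t$ is series-parallel if it can be reduced to a single edge between two vertices by repeatedly (1) replacing a pair of parallel edges by a single edge joining their common endpoints, and (2) replacing the two edges incident to a degree-2 vertex other than $s,t$ by a single edge (removing that vertex). $\mathcal{C}(G)$ denotes the set of minimum cardinality $s$-$t$ edge cuts of $G$ and $C_e(G)=\{S\in\mathcal{C}(G): e\in S\}$. The EPCG has players $N=E$ and $v(S)=1$ iff the edges of $S$ contain an $s$-$t$ path, else $0$. For payoff $x$, $e(x,S)=x(S)-v(S)$ with $x(S)=\sum_{i\in S}x_i$; the $\epsilon$-core is $\{x: x(N)=v(N),\ e(x,S)\ge-\epsilon\ \forall S\}$, and the least core is the $\epsilon$-core for the smallest $\epsilon$ for which it is non-empty (with payoffs $x_i\ge 0$). *)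

From HB Require Import structures.
From mathcomp Require Import all_boot all_order all_algebra.
Set Implicit Arguments. Unset Strict Implicit. Unset Printing Implicit Defensive.
Import Order.TTheory GRing.Theory Num.Theory.

(* A finite undirected multigraph: vertex type T, edge type E,
   each edge e has (unordered) endpoints ends e. *)

Section Graph.
Variables (T E : finType) (ends : E -> T * T) (s t : T).

Definition joins (e : E) (u v : T) : bool :=
  (ends e == (u, v)) || (ends e == (v, u)).

Definition adjS (S : {set E}) : rel T :=
  fun u v => [exists e in S, joins e u v].

Definition has_st_path (S : {set E}) : bool := connect (adjS S) s t.

Definition st_cut (S : {set E}) : bool := ~~ has_st_path (~: S).

Definition min_cut (S : {set E}) : Prop :=
  st_cut S /\ forall S' : {set E}, st_cut S' -> #|S| <= #|S'|.

Definition uedge (p q : T * T) : bool := (p == q) || (p == (q.2, q.1)).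

Definition state := ({set T} * seq (T * T))%type.

Inductive sp_step : state -> state -> Prop :=
  | sp_par (V : {set T}) (es rest : seq (T * T)) (e1 e2 : T * T) :
      perm_eq es (e1 :: e2 :: rest) -> uedge e1 e2 ->
      sp_step (V, es) (V, e1 :: rest)
  | sp_ser (V : {set T}) (es rest : seq (T * T)) (e1 e2 : T * T) (a w b : T) :
      w \in V -> w != s -> w != t -> a != w -> b != w ->
      perm_eq es (e1 :: e2 :: rest) -> uedge e1 (a, w) -> uedge e2 (w, b) ->
      all (fun p => (p.1 != w) && (p.2 != w)) rest ->
      sp_step (V, es) (V :\ w, (a, b) :: rest).

Inductive sp_reduces : state -> state -> Prop :=
  | spr_refl x : sp_reduces x x
  | spr_step x y z : sp_step x y -> sp_reduces y z -> sp_reduces x z.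

(* G = (T, E) with source s and sink t is series-parallel: the full graph
   reduces to a single edge joining s and t (on vertex set {s,t}). *)
Definition series_parallel : Prop :=
  exists p : T * T, uedge p (s, t) /\
    sp_reduces ([set: T], [seq ends e | e <- enum E]) ([set s; t], [:: p]).

Variable R : realFieldType.
Local Open Scope ring_scope.

Definition epcg_v (S : {set E}) : R := if has_st_path S then 1 else 0.

Definition payoff_sum (x : E -> R) (S : {set E}) : R := \sum_(i in S) x i.

Definition excess (x : E -> R) (S : {set E}) : R := payoff_sum x S - epcg_v S.

Definition eps_core (eps : R) (x : E -> R) : Prop :=
  (forall i, 0 <= x i) /\
  payoff_sum x [set: E] = epcg_v [set: E] /\
  (forall S : {set E}, - eps <= excess x S).

Definition least_core (x : E -> R) : Prop :=
  exists eps : R, eps_core eps x /\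
    forall (eps' : R) (y : E -> R), eps_core eps' y -> eps <= eps'.

End Graph.

From mathcomp Require Import all_boot all_order all_algebra.
From mathcomp Require Import ring lra.
Import Order.TTheory GRing.Theory Num.Theory.
Set Implicit Arguments. Unset Strict Implicit.
Local Open Scope ring_scope.

(* Let k be the size of a minimum s-t cut. Comparing x with the payoff 1/k on the
   edges of a minimum cut shows that every edge set containing an s-t path has
   payoff at least 1/k. Let d(v) be the least payoff of an edge set joining s to v;
   then d(t) >= 1/k and |d(u) - d(v)| <= x_f for every edge f = uv. For
   0 <= p < d(t) the edges f = uv with min(d u, d v) <= p < max(d u, d v) form an
   s-t cut, so integrating over p,
     1 = sum_f x_f >= sum_f |d(u) - d(v)| >= int_0^d(t) #(edges crossing p) dp
       >= k d(t) >= 1.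
   Equality throughout forces x_f to be the length of the part of
   [min(d u, d v), max(d u, d v)] below d(t), and every level cut to have exactly
   k edges. Hence an edge with x_e > 0 crosses the level min(d u, d v) < d(t),
   whose cut is minimum. *)

Definition part_below (R : realFieldType) (l h r : R) : R :=
  if r <= l then 0 else if r <= h then r - l else h - l.

Lemma part_below_le (R : realFieldType) (l h r : R) :
  l <= h -> part_below l h r <= h - l.
Proof. by rewrite /part_below => ?; case: (lerP r l) => ?; case: (lerP r h) => ?; lra. Qed.

Lemma part_belowB (R : realFieldType) (l h p b : R) :
  l <= h -> p < b -> ~~ (p < l < b) -> ~~ (p < h < b) ->
  part_below l h b - part_below l h p = if l <= p < h then b - p else 0.
Proof.
rewrite /part_below => lh pb nl nh.
case: (lerP b l) => ?; case: (lerP p l) => ?; case: (lerP b h) => ?;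
  case: (lerP p h) => ?; case: (lerP l p) => ?; case: (ltrP p h) => ? /=;
  move: nl nh; rewrite !negb_and -!leNgt => /orP[] ? /orP[] ?; lra.
Qed.

Section Layers.
Variables (R : realFieldType) (T E : finType) (level : T -> R) (lo hi : E -> R).
Hypothesis lo_le_hi : forall f, lo f <= hi f.
Hypothesis lo_level : forall f, exists u, lo f = level u.
Hypothesis hi_level : forall f, exists v, hi f = level v.

Definition crossing (p : R) : {set E} := [set f | lo f <= p < hi f].

(* The integral of [#|crossing p|] over [p <= r]. *)
Definition layer (r : R) : R := \sum_f part_below (lo f) (hi f) r.

Lemma layerB_gap p b : p < b -> (forall v, ~~ (p < level v < b)) ->
  layer b - layer p = #|crossing p|%:R * (b - p).
Proof.
move=> pb gap; rewrite -sumrB mulr_natl -sumr_const [RHS]big_mkcond /=.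
apply: eq_bigr => f _; rewrite inE part_belowB //.
- by have [u ->] := lo_level f.
- by have [v ->] := hi_level f.
Qed.

Lemma layerB_ge (k : nat) a b : a <= b ->
  (forall p, a <= p < b -> (k <= #|crossing p|)%N) ->
  k%:R * (b - a) <= layer b - layer a.
Proof.
move=> ab cross_ge; have [n] := ubnP #|[set v | a < level v < b]|.
elim: n a b ab cross_ge => // n IH a b ab cross_ge lt_n.
have [w /andP[aw wb] | gap] := pickP [pred v | a < level v < b]; last first.
  have [<- | neq_ab] := eqVneq a b; first by rewrite !subrr mulr0.
  have a_lt_b : a < b by rewrite lt_neqAle neq_ab.
  rewrite layerB_gap //; last by move=> v; have := gap v; rewrite /= => ->.
  by rewrite ler_wpM2r ?subr_ge0 // ler_nat cross_ge // lexx.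
have shrink c d : a <= c -> d <= b -> (c == level w) || (d == level w) ->
    (#|[set v | (c < level v < d)%R]| < n)%N.
  move=> ac db cd; rewrite -ltnS; apply: leq_trans lt_n; apply: proper_card.
  apply/properP.
  split; last by exists w; rewrite !inE ?aw ?wb //; case/orP: cd => /eqP->;
    rewrite ltxx ?andbF.
  by apply/subsetP => v; rewrite !inE => /andP[? ?]; apply/andP; split; lra.
have ge_lo : k%:R * (level w - a) <= layer (level w) - layer a.
  apply: IH (ltW aw) _ (shrink _ _ (lexx a) (ltW wb) _); last by rewrite eqxx orbT.
  by move=> p /andP[ap pw]; apply: cross_ge; rewrite ap /=; lra.
have ge_hi : k%:R * (b - level w) <= layer b - layer (level w).
  apply: IH (ltW wb) _ (shrink _ _ (ltW aw) (lexx b) _); last by rewrite eqxx.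
  by move=> p /andP[wp pb]; apply: cross_ge; rewrite pb andbT; lra.
have -> : k%:R * (b - a) = k%:R * (b - level w) + k%:R * (level w - a) by ring.
by apply: le_trans (lerD ge_hi ge_lo) _; lra.
Qed.

Lemma exists_next_level p D : p < D ->
  exists2 q, p < q <= D & forall v, ~~ (p < level v < q).
Proof.
move=> pD; have [w wP | gap] := pickP [pred v | p < level v < D]; last first.
  by exists D; rewrite ?pD ?lexx // => v; have := gap v; rewrite /= => ->.
have [u /andP[pu uD] u_min] := arg_minP level wP.
exists (level u); first by rewrite pu ltW.
move=> v; apply/negP => /andP[pv vu].
by have := u_min v; rewrite /= pv (lt_trans vu uD) => /(_ isT); rewrite leNgt vu.
Qed.

Lemma crossing_card_le_of_layerB (k : nat) a D :
  (forall p, a <= p < D -> (k <= #|crossing p|)%N) ->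
  layer D - layer a <= k%:R * (D - a) ->
  forall p, a <= p < D -> (#|crossing p| <= k)%N.
Proof.
move=> cross_ge tight p /andP[ap pD].
have [q /andP[pq qD] gap] := exists_next_level pD.
have below_p : k%:R * (p - a) <= layer p - layer a.
  by apply: layerB_ge ap _ => r /andP[ar rp]; apply: cross_ge; rewrite ar /=; lra.
have above_q : k%:R * (D - q) <= layer D - layer q.
  by apply: layerB_ge qD _ => r /andP[qr rD]; apply: cross_ge; rewrite rD andbT; lra.
rewrite leqNgt; apply/negP => k_lt; have := layerB_gap pq gap.
have : k.+1%:R <= #|crossing p|%:R :> R by rewrite ler_nat.
rewrite -natr1; nra.
Qed.

End Layers.

Section Paths.
Variables (T E : finType) (ends : E -> T * T) (s t : T).

Lemma joins_sym (f : E) u v : joins ends f u v = joins ends f v u.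
Proof. by rewrite /joins orbC. Qed.

Lemma adjS_sym (S : {set E}) : symmetric (adjS ends S).
Proof. by move=> u v; apply: eq_existsb => f; rewrite joins_sym. Qed.

Lemma joins_ends (f : E) : joins ends f (ends f).1 (ends f).2.
Proof. by rewrite /joins -surjective_pairing eqxx. Qed.

Lemma connect_adjS_sub (S S' : {set E}) u v : S \subset S' ->
  connect (adjS ends S) u v -> connect (adjS ends S') u v.
Proof.
move=> sub; apply: connect_sub => a b /existsP[f /andP[fS j]].
by apply: connect1; apply/existsP; exists f; rewrite (subsetP sub) // j.
Qed.

Lemma connect_adjS0 u v : connect (adjS ends set0) u v -> u = v.
Proof.
by case/connectP => [[|y p] /= P ->] //; case/andP: P => /existsP[f]; rewrite inE.
Qed.

Lemma st_cut_setT : s != t -> st_cut ends s t [set: E].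
Proof.
by move=> st; rewrite /st_cut /has_st_path setCT; apply/negP => /connect_adjS0/eqP;
  apply/negP.
Qed.

Lemma exists_min_cut : s != t -> exists C, min_cut ends s t C.
Proof.
move=> /st_cut_setT cutT.
have [C cutC C_min] := arg_minnP (fun S : {set E} => #|S|) cutT.
by exists C; split.
Qed.

Lemma st_path_meets_cut (C S : {set E}) :
  st_cut ends s t C -> has_st_path ends s t S -> exists2 i, i \in S & i \in C.
Proof.
move=> /negP cutC pathS; apply/exists_inP; apply/negP => /exists_inP noi.
apply: cutC; apply: connect_adjS_sub pathS; apply/subsetP => i iS.
by rewrite inE; apply/negP => iC; apply: noi; exists i.
Qed.

Lemma st_cut_card_gt0 (C : {set E}) :
  has_st_path ends s t [set: E] -> st_cut ends s t C -> (0 < #|C|)%N.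
Proof.
move=> pathT cutC; have [i _ iC] := st_path_meets_cut cutC pathT.
by rewrite card_gt0; apply/set0Pn; exists i.
Qed.

End Paths.

Section Payoff.
Variables (E : finType) (R : realFieldType) (x : E -> R).
Hypothesis x_ge0 : forall i, 0 <= x i.

Lemma payoff_sum_ge0 (S : {set E}) : 0 <= payoff_sum x S.
Proof. exact: sumr_ge0. Qed.

Lemma payoff_sum_ge_mem (S : {set E}) i : i \in S -> x i <= payoff_sum x S.
Proof. by move=> iS; rewrite /payoff_sum (bigD1 i) //= lerDl sumr_ge0. Qed.

Lemma payoff_sum_setU1_le (S : {set E}) f :
  payoff_sum x (f |: S) <= x f + payoff_sum x S.
Proof.
rewrite /payoff_sum (bigD1 f) ?setU11 //= lerD2l [leRHS]big_mkcond [leLHS]big_mkcond.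
by apply: ler_sum => i _; rewrite in_setU1; case: (i == f); case: (i \in S).
Qed.

End Payoff.

Section LeastCore.
Variables (T E : finType) (ends : E -> T * T) (s t : T) (R : realFieldType).

Definition cut_payoff (C : {set E}) (i : E) : R :=
  if i \in C then #|C|%:R^-1 else 0.

Lemma cut_payoff_core (C : {set E}) :
  has_st_path ends s t [set: E] -> st_cut ends s t C ->
  eps_core ends s t (1 - #|C|%:R^-1) (cut_payoff C).
Proof.
move=> pathT cutC; have C_gt0 : 0 < #|C|%:R :> R.
  by rewrite ltr0n (st_cut_card_gt0 pathT cutC).
have c_le1 : #|C|%:R^-1 <= 1 :> R by rewrite invf_le1 // ler1n -(ltr0n R).
have y_ge0 i : 0 <= cut_payoff C i.
  by rewrite /cut_payoff; case: ifP => // _; rewrite invr_ge0 ltW.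
split=> [//|]; split=> [|S].
  rewrite /epcg_v pathT /payoff_sum -big_mkcondr /= (eq_bigl (mem C)) => [|i].
    by rewrite sumr_const -(mulr_natr #|C|%:R^-1) mulVf ?gt_eqF.
  by rewrite in_setT.
rewrite /excess /epcg_v; case: ifP => pathS; last first.
  by have := payoff_sum_ge0 y_ge0 S; lra.
have [i iS iC] := st_path_meets_cut cutC pathS.
by have := payoff_sum_ge_mem y_ge0 iS; rewrite /cut_payoff iC; lra.
Qed.

Lemma least_core_path_payoff (x : E -> R) (C : {set E}) :
  least_core ends s t x -> has_st_path ends s t [set: E] -> st_cut ends s t C ->
  forall S, has_st_path ends s t S -> #|C|%:R^-1 <= payoff_sum x S.
Proof.
move=> [eps [[_ [_ exc]] eps_min]] pathT cutC S pathS.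
have := eps_min _ _ (cut_payoff_core pathT cutC).
by have := exc S; rewrite /excess /epcg_v pathS; lra.
Qed.

End LeastCore.

Section Distance.
Variables (T E : finType) (ends : E -> T * T) (s t : T) (R : realFieldType).
Variable x : E -> R.
Hypothesis x_ge0 : forall i, 0 <= x i.

(* Unreachable vertices cost 1, the total payoff. *)
Definition reach_cost (v : T) (S : {set E}) : R :=
  if connect (adjS ends S) s v then payoff_sum x S else 1.

Definition dist (v : T) : R := reach_cost v [arg min_(S < set0) reach_cost v S]%O.

Lemma dist_le v S : dist v <= reach_cost v S.
Proof. by rewrite /dist; case: arg_minP => // S0 _; apply. Qed.

Lemma dist_attained v : exists S, dist v = reach_cost v S.
Proof. by eexists. Qed.

Lemma reach_cost_ge0 v S : 0 <= reach_cost v S.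
Proof. by rewrite /reach_cost; case: ifP => // _; apply: payoff_sum_ge0. Qed.

Lemma dist_ge0 v : 0 <= dist v.
Proof. exact: reach_cost_ge0. Qed.

Lemma dist_le1 v : dist v <= 1.
Proof.
apply: le_trans (dist_le v set0) _.
by rewrite /reach_cost /payoff_sum big_set0; case: ifP.
Qed.

Lemma dist_source : dist s = 0.
Proof.
apply/le_anti; rewrite dist_ge0 andbT; apply: le_trans (dist_le s set0) _.
by rewrite /reach_cost connect0 /payoff_sum big_set0.
Qed.

Lemma dist_sink_ge (c : R) : c <= 1 ->
  (forall S, has_st_path ends s t S -> c <= payoff_sum x S) -> c <= dist t.
Proof.
move=> c_le1 path_ge; have [S ->] := dist_attained t.
by rewrite /reach_cost; case: ifP => // pathS; apply: path_ge.
Qed.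

Lemma dist_joins f u v : joins ends f u v -> dist v <= dist u + x f.
Proof.
move=> fuv; have [S du] := dist_attained u.
move: du; rewrite /reach_cost; case: ifP => [su -> | _ ->]; last first.
  by have := dist_le1 v; have := x_ge0 f; lra.
have sv : connect (adjS ends (f |: S)) s v.
  apply: connect_trans (connect_adjS_sub (subsetUr _ _) su) _.
  by apply: connect1; apply/existsP; exists f; rewrite setU11 fuv.
apply: le_trans (dist_le v (f |: S)) _.
by rewrite /reach_cost sv addrC; apply: payoff_sum_setU1_le.
Qed.

Definition dlo (f : E) : R := Num.min (dist (ends f).1) (dist (ends f).2).
Definition dhi (f : E) : R := Num.max (dist (ends f).1) (dist (ends f).2).

Lemma dlo_le_dhi f : dlo f <= dhi f.
Proof.
by rewrite /dlo /dhi minEle maxEle; case: (leP (dist (ends f).1)) => ?; lra.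
Qed.

Lemma dlo_dist f : exists u, dlo f = dist u.
Proof. by rewrite /dlo minEle; case: ifP; eexists. Qed.

Lemma dhi_dist f : exists u, dhi f = dist u.
Proof. by rewrite /dhi maxEle; case: ifP; eexists. Qed.

Lemma dhi_sub_dlo f : dhi f - dlo f <= x f.
Proof.
have := dist_joins (joins_ends ends f).
have := dist_joins (etrans (joins_sym _ _ _ _) (joins_ends ends f)).
rewrite /dlo /dhi minEle maxEle => ? ?.
by case: (leP (dist (ends f).1)) => ?; lra.
Qed.

Lemma joins_dist_bounds f u v : joins ends f u v -> dlo f <= dist u /\ dist v <= dhi f.
Proof.
rewrite /dlo /dhi minEle maxEle.
by case/orP=> /eqP-> /=; [case: (leP (dist u)) | case: (leP (dist v))] => ?; split; lra.
Qed.

Lemma crossing_st_cut p : 0 <= p < dist t -> st_cut ends s t (crossing dlo dhi p).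
Proof.
move=> /andP[p_ge0 p_lt]; apply/negP => st_path.
have closed_below : closed (adjS ends (~: crossing dlo dhi p)) [pred v | dist v <= p].
  apply: intro_closed => [|u v /existsP[f /andP[f_out fuv]]].
    exact: sym_connect_sym (adjS_sym ends _).
  move: f_out; rewrite !inE /= negb_and -ltNge -leNgt => f_out u_le.
  by have [? ?] := joins_dist_bounds fuv; case/orP: f_out => ?; lra.
have := closed_connect closed_below st_path.
by rewrite !inE /= dist_source p_ge0 leNgt p_lt.
Qed.

Hypothesis x_total : payoff_sum x [set: E] = 1.
Variable k : nat.
Hypothesis k_gt0 : (0 < k)%N.
Hypothesis k_le_cut : forall C, st_cut ends s t C -> (k <= #|C|)%N.
Hypothesis path_payoff :
  forall S, has_st_path ends s t S -> k%:R^-1 <= payoff_sum x S.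

Lemma crossing_dist_card_ge p : 0 <= p < dist t -> (k <= #|crossing dlo dhi p|)%N.
Proof. by move=> ?; apply: k_le_cut; apply: crossing_st_cut. Qed.

Lemma layer_dist0 : layer dlo dhi 0 = 0.
Proof. by apply: big1 => f _; have [u ->] := dlo_dist f; rewrite /part_below dist_ge0. Qed.

Lemma layer_dist_le1 r : layer dlo dhi r <= 1.
Proof.
rewrite -x_total /payoff_sum (eq_bigl xpredT) => [|i]; last by rewrite in_setT.
apply: ler_sum => f _; apply: le_trans (dhi_sub_dlo f).
exact: part_below_le (dlo_le_dhi f).
Qed.

Lemma mul_k_dist_sink_ge1 : 1 <= k%:R * dist t.
Proof.
have k_pos : 0 < k%:R :> R by rewrite ltr0n.
have inv_le1 : k%:R^-1 <= 1 :> R by rewrite invf_le1 // ler1n.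
have := ler_wpM2l (ltW k_pos) (dist_sink_ge inv_le1 path_payoff).
by rewrite mulfV ?gt_eqF.
Qed.

Lemma layer_dist_sink_ge1 : 1 <= layer dlo dhi (dist t).
Proof.
apply: le_trans mul_k_dist_sink_ge1 _.
have := layerB_ge dlo_le_dhi dlo_dist dhi_dist (dist_ge0 t) crossing_dist_card_ge.
by rewrite layer_dist0 !subr0.
Qed.

Lemma payoff_eq_part_below f : x f = part_below (dlo f) (dhi f) (dist t).
Proof.
have slack_ge0 g : 0 <= x g - part_below (dlo g) (dhi g) (dist t).
  by rewrite subr_ge0; apply: le_trans (part_below_le _ (dlo_le_dhi g)) (dhi_sub_dlo g).
have slack_sum : \sum_g (x g - part_below (dlo g) (dhi g) (dist t)) = 0.
  apply/le_anti; rewrite sumr_ge0 // andbT sumrB.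
  have : \sum_g x g = 1.
    by rewrite -x_total /payoff_sum; apply: eq_bigl => i; rewrite in_setT.
  by have := layer_dist_sink_ge1; rewrite /layer; lra.
by apply/eqP; rewrite -subr_eq0 (psumr_eq0P (fun g _ => slack_ge0 g) slack_sum).
Qed.

Lemma crossing_dist_card_le p : 0 <= p < dist t -> (#|crossing dlo dhi p| <= k)%N.
Proof.
apply: (crossing_card_le_of_layerB dlo_le_dhi dlo_dist dhi_dist crossing_dist_card_ge).
by rewrite layer_dist0 !subr0; apply: le_trans (layer_dist_le1 _) mul_k_dist_sink_ge1.
Qed.

Lemma positive_payoff_in_min_cut f :
  0 < x f -> exists2 C, min_cut ends s t C & f \in C.
Proof.
rewrite payoff_eq_part_below /part_below => xf_pos.
have [lo_lt_t lo_lt_hi] : dlo f < dist t /\ dlo f < dhi f.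
  move: xf_pos; have := dlo_le_dhi f.
  by case: (lerP (dist t) (dlo f)) => ?; case: (lerP (dist t) (dhi f)) => ? ? ?; split; lra.
have lo_ge0 : 0 <= dlo f by have [u ->] := dlo_dist f; apply: dist_ge0.
exists (crossing dlo dhi (dlo f)); last by rewrite inE lexx lo_lt_hi.
split=> [|C cutC]; first by apply: crossing_st_cut; rewrite lo_ge0.
by apply: leq_trans (k_le_cut cutC); apply: crossing_dist_card_le; rewrite lo_ge0.
Qed.

End Distance.

Theorem lemma1 (T E : finType) (ends : E -> T * T) (s t : T)
  (R : realFieldType) (x : E -> R) (e : E) :
  s != t ->
  series_parallel ends s t ->
  least_core ends s t x ->
  (forall C : {set E}, min_cut ends s t C -> e \notin C) ->
  x e = 0.
Proof.
move=> st_neq _ lc e_notin_min_cut.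
have [_ [[x_ge0 [x_total _]] _]] := lc.
have [pathT | no_pathT] := boolP (has_st_path ends s t [set: E]); last first.
  rewrite /epcg_v (negbTE no_pathT) in x_total.
  exact: (psumr_eq0P (fun i _ => x_ge0 i) x_total).
rewrite /epcg_v pathT in x_total.
have [C [cutC C_min]] := exists_min_cut ends st_neq.
apply/eqP; rewrite eq_le x_ge0 andbT leNgt; apply/negP => xe_pos.
have [D D_min eD] := positive_payoff_in_min_cut x_ge0 x_total
  (st_cut_card_gt0 pathT cutC) C_min (least_core_path_payoff lc pathT cutC) xe_pos.
by move: (e_notin_min_cut D D_min); rewrite eD.
Qed.
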